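(* Let $R$ be a von Neumann regular ring and let $K$ be a class of left $R$-modules such that $\mathbf{K}=(K,\leq_p)$ is an AEC. If $K$ is closed under submodules and has arbitrarily large models, then $\mathbf{K}$ is $\lambda$-stable for every infinite cardinal $\lambda$ with $\lambda^{|R|+\aleph_0}=\lambda$.
   Context: A ring $R$ (associative with unity) is von Neumann regular if for every $r\in R$ there is $s\in R$ with $r=rsr$. $\leq_p$ is the pure submodule relation. An AEC $(K,\leq_p)$: $K$ closed under isomorphism and unions of $\leq_p$-chains, with a Löwenheim–Skolem number. Galois types $\mathbf{gtp}(b/A;N)$ are equivalence classes of triples $(b,A,N)$ under the transitive closure of: $(b_1,A,N_1)\sim(b_2,A,N_2)$ iff there exist $N'\in K$ and pure embeddings $f_\ell:N_\ell\to N'$ fixing $A$ with $f_1(b_1)=f_2(b_2)$; $\mathbf{gS}(M)$ is the set of Galois types of single elements over $M$ in pure extensions $N\in K$. $\mathbf{K}$ is $\lambda$-stable if $|\mathbf{gS}(M)|\leq\lambda$ for all $M\in K$ of cardinality $\lambda$. *)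

From HB Require Import structures.
From mathcomp Require Import all_boot all_order all_algebra.
From Stdlib Require Import Relation_Operators.
Set Implicit Arguments. Unset Strict Implicit. Unset Printing Implicit Defensive.
Import GRing.Theory.
Local Open Scope ring_scope.

Definition vN_regular (R : pzRingType) : Prop :=
  forall r : R, exists s : R, r = r * s * r.

(* Left R-modules, as explicit structures (so that arbitrary classes of
   modules can be quantified over). *)
Record lmod (R : pzRingType) : Type := LMod {
  carrier :> Type;
  mzero : carrier;
  madd : carrier -> carrier -> carrier;
  mopp : carrier -> carrier;
  mscale : R -> carrier -> carrier;
  maddA : forall x y z, madd x (madd y z) = madd (madd x y) z;
  maddC : forall x y, madd x y = madd y x;
  madd0 : forall x, madd mzero x = x;
  maddN : forall x, madd (mopp x) x = mzero;
  mscaleDr : forall r x y, mscale r (madd x y) = madd (mscale r x) (mscale r y);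
  mscaleDl : forall r s x, mscale (r + s) x = madd (mscale r x) (mscale s x);
  mscaleM : forall r s x, mscale (r * s) x = mscale r (mscale s x);
  mscale1 : forall x, mscale 1 x = x
}.

Section Mods.
Variable R : pzRingType.

Definition lincomb (M : lmod R) (m : nat) (a : 'I_m -> R) (x : 'I_m -> M) : M :=
  \big[@madd R M / @mzero R M]_(j < m) mscale (a j) (x j).

Definition rlinear (M N : lmod R) (f : M -> N) : Prop :=
  (forall x y, f (madd x y) = madd (f x) (f y)) /\
  (forall r x, f (mscale r x) = mscale r (f x)).

Definition pure_emb (M N : lmod R) (f : M -> N) : Prop :=
  rlinear f /\ injective f /\
  forall (n m : nat) (A : 'I_n -> 'I_m -> R) (c : 'I_n -> M),
    (exists x : 'I_m -> N, forall i, lincomb (A i) x = f (c i)) ->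
    exists y : 'I_m -> M, forall i, lincomb (A i) y = c i.

Definition card_le (A B : Type) : Prop := exists f : A -> B, injective f.
Definition card_eq (A B : Type) : Prop := exists f : A -> B, bijective f.

Definition mclass := lmod R -> Prop.

Definition iso_closed (K : mclass) : Prop :=
  forall (M N : lmod R) (f : M -> N), rlinear f -> bijective f -> K M -> K N.

(* Closure under unions of <=_p-chains: a chain (M_i)_{i in I}, I well ordered,
   realised inside its union U via injective maps e_i, with M_i <=_p M_j for
   i <= j; then U is in K and each M_i <=_p U. *)
Definition chain_closed (K : mclass) : Prop :=
  forall (I : Type) (le : I -> I -> Prop),
    (forall i, le i i) ->
    (forall i j k, le i j -> le j k -> le i k) ->
    (forall i j, le i j -> le j i -> i = j) ->
    (forall i j, le i j \/ le j i) ->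
    well_founded (fun i j => le i j /\ i <> j) ->
  forall (U : lmod R) (M : I -> lmod R) (e : forall i, M i -> U),
    (forall i, K (M i)) ->
    (forall i, rlinear (e i)) -> (forall i, injective (e i)) ->
    (forall i j, le i j -> exists h : M i -> M j,
         pure_emb h /\ forall x, e j (h x) = e i x) ->
    (forall u : U, exists i, exists x : M i, e i x = u) ->
    K U /\ forall i, pure_emb (e i).

Definition has_LS_number (K : mclass) : Prop :=
  exists LS : Type, card_le (R + nat) LS /\
    forall (M : lmod R) (A : M -> Prop), K M ->
      exists (N : lmod R) (g : N -> M),
        K N /\ pure_emb g /\ (forall a, A a -> exists y, g y = a) /\
        card_le N ({a : M | A a} + LS).

Definition is_AEC (K : mclass) : Prop :=
  iso_closed K /\ chain_closed K /\ has_LS_number K.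

Definition sub_closed (K : mclass) : Prop :=
  forall (S N : lmod R) (f : S -> N), rlinear f -> injective f -> K N -> K S.

Definition arb_large (K : mclass) : Prop :=
  forall L : Type, exists M : lmod R, K M /\ card_le L M.

(* triples (b, M, N) with M <=_p N in K, M identified through a pure embedding *)
Record gtriple (K : mclass) (M : lmod R) : Type := GTriple {
  gN : lmod R;
  gNK : K gN;
  gf : M -> gN;
  gf_pure : pure_emb gf;
  gb : gN
}.

Definition gatomic (K : mclass) (M : lmod R) (t1 t2 : gtriple K M) : Prop :=
  exists (N' : lmod R) (g1 : gN t1 -> N') (g2 : gN t2 -> N'),
    K N' /\ pure_emb g1 /\ pure_emb g2 /\
    (forall a, g1 (gf t1 a) = g2 (gf t2 a)) /\ g1 (gb t1) = g2 (gb t2).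

Definition gequiv (K : mclass) (M : lmod R) := clos_trans _ (@gatomic K M).

(* |gS(M)| <= |L| : the Galois types over M inject into L *)
Definition gS_card_le (K : mclass) (M : lmod R) (L : Type) : Prop :=
  exists c : gtriple K M -> L, forall t1 t2, c t1 = c t2 -> gequiv t1 t2.

(* K is lambda-stable, lambda given as the cardinality of the type L *)
Definition stable_in (K : mclass) (L : Type) : Prop :=
  forall M : lmod R, K M -> card_eq M L -> gS_card_le K M L.

End Mods.

From HB Require Import structures.
From mathcomp Require Import all_boot all_order all_algebra boolp.
From Stdlib Require Import Relation_Operators.
Set Implicit Arguments. Unset Strict Implicit. Unset Printing Implicit Defensive.
Import GRing.Theory.
Local Open Scope ring_scope.

(* Over a von Neumann regular ring every matrix A has an inner inverse G
   (A G A = A), so every injective linear map f : M -> N is pure: if A x = f c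
   is solvable in N, then G c solves it in M.  Given a triple (b, M, N), the
   submodule R b + M of N is therefore in K (closure under submodules) and
   pure in N, and its isomorphism type over M is determined by the set of
   pairs (r, m) with r b + m = 0.  Triples with the same such set have the same
   Galois type, and these sets, coded as partial functions R -> M, number at
   most (lambda + 1)^|R| <= lambda^(|R| + aleph_0) = lambda. *)

Section LmodInstances.
Variables (R : pzRingType) (M : lmod R).

HB.instance Definition _ := gen_eqMixin (carrier M).
HB.instance Definition _ := gen_choiceMixin (carrier M).
HB.instance Definition _ := GRing.isZmodule.Build (carrier M)
  (@maddA R M) (@maddC R M) (@madd0 R M) (@maddN R M).

Local Lemma mscaleA a b (v : M) : mscale a (mscale b v) = mscale (a * b) v.
Proof. by rewrite mscaleM. Qed.

HB.instance Definition _ := GRing.Zmodule_isLmodule.Build R (carrier M)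
  mscaleA (@mscale1 R M) (@mscaleDr R M) (fun v a b => @mscaleDl R M a b v).
End LmodInstances.

Section RegularMatrices.
Variable R : pzRingType.

Definition regular_mx n m (A : 'M[R]_(n, m)) := exists G : 'M_(m, n), A *m G *m A = A.

Lemma regular_mx0 n m : regular_mx (0 : 'M[R]_(n, m)).
Proof. by exists 0; rewrite !mul0mx. Qed.

Lemma regular_mx_residual n m (A : 'M[R]_(n, m)) (Y : 'M_(m, n)) :
  regular_mx (A - A *m Y *m A) -> regular_mx A.
Proof.
set Z := A - A *m Y *m A => -[W ZWZ].
exists (Y + (1%:M - Y *m A) *m W *m (1%:M - A *m Y)).
have AZ : A *m (1%:M - Y *m A) = Z by rewrite mulmxBr mulmx1 mulmxA.
have ZA : (1%:M - A *m Y) *m A = Z by rewrite mulmxBl mul1mx.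
rewrite mulmxDr mulmxDl !mulmxA AZ -[Z *m W *m _ *m A]mulmxA ZA ZWZ.
by rewrite addrC subrK.
Qed.

Lemma regular_row_mx0 n k m (Z : 'M[R]_(n, m)) :
  regular_mx Z -> regular_mx (row_mx (0 : 'M_(n, k)) Z).
Proof.
case=> W ZWZ; exists (col_mx 0 W).
by rewrite mul_row_col mulmx0 add0r mul_mx_row mulmx0 ZWZ.
Qed.

Lemma regular_col_mx0 k n m (Z : 'M[R]_(n, m)) :
  regular_mx Z -> regular_mx (col_mx (0 : 'M_(k, m)) Z).
Proof.
case=> W ZWZ; exists (row_mx 0 W).
by rewrite -mulmxA mul_row_col mulmx0 add0r mul_col_mx mul0mx mulmxA ZWZ.
Qed.

Lemma regular_col_mx k n m (X : 'M[R]_(k, m)) (A : 'M_(n, m)) :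
  regular_mx X -> (forall B : 'M_(n, m), regular_mx B) -> regular_mx (col_mx X A).
Proof.
case=> g XgX regB; apply: (@regular_mx_residual _ _ _ (g *m row_mx 1%:M 0)).
rewrite mulmxA -[_ *m row_mx _ _ *m _]mulmxA mul_row_col mul1mx mul0mx addr0.
rewrite !mul_col_mx XgX opp_col_mx add_col_mx subrr.
exact/regular_col_mx0/regB.
Qed.

Lemma regular_row_mx n k m (X : 'M[R]_(n, k)) (A : 'M_(n, m)) :
  regular_mx X -> (forall B : 'M_(n, m), regular_mx B) -> regular_mx (row_mx X A).
Proof.
case=> g XgX regB; apply: (@regular_mx_residual _ _ _ (col_mx 1%:M 0 *m g)).
rewrite !mulmxA mul_row_col mulmx1 mulmx0 addr0.
rewrite mul_mx_row XgX opp_row_mx add_row_mx subrr.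
exact/regular_row_mx0/regB.
Qed.

Hypothesis regR : vN_regular R.

Lemma regular_mx11 (x : 'M[R]_1) : regular_mx x.
Proof.
have [s xsx] := regR (x 0 0); exists s%:M.
by rewrite (mx11_scalar x) -!scalar_mxM -xsx.
Qed.

Lemma regular_cV n (a : 'cV[R]_n) : regular_mx a.
Proof.
elim: n a => [|n IHn] a; first by rewrite flatmx0; apply: regular_mx0.
rewrite -[a](@vsubmxK _ 1 n); exact: regular_col_mx (regular_mx11 _) IHn.
Qed.

Lemma vN_regular_mx n m (A : 'M[R]_(n, m)) : regular_mx A.
Proof.
elim: m A => [|m IHm] A; first by rewrite thinmx0; apply: regular_mx0.
rewrite -[A](@hsubmxK _ n 1 m); exact: regular_row_mx (regular_cV _) IHm.
Qed.
End RegularMatrices.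


Section MatrixAction.
Variables (R : pzRingType) (V : lmodType R).

Definition mx_act n m (A : 'M[R]_(n, m)) (x : 'I_m -> V) : 'I_n -> V :=
  fun i => \sum_j A i j *: x j.

Lemma eq_mx_act n m (A : 'M[R]_(n, m)) x y : x =1 y -> mx_act A x =1 mx_act A y.
Proof. by move=> xy i; apply: eq_bigr => j _; rewrite xy. Qed.

Lemma mx_actM n m p (A : 'M[R]_(n, m)) (B : 'M_(m, p)) x :
  mx_act (A *m B) x =1 mx_act A (mx_act B x).
Proof.
move=> i; rewrite /mx_act; under eq_bigr do rewrite mxE scaler_suml.
rewrite exchange_big; apply: eq_bigr => j _; rewrite scaler_sumr.
by apply: eq_bigr => k _; rewrite scalerA.
Qed.
End MatrixAction.

Section RLinear.
Variables (R : pzRingType) (M N : lmod R) (f : M -> N).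
Hypothesis linf : rlinear f.

Lemma rlinearD x y : f (x + y) = f x + f y. Proof. by case: linf => fD _; apply: fD. Qed.
Lemma rlinearZ r x : f (r *: x) = r *: f x. Proof. by case: linf => _ fZ; apply: fZ. Qed.
Lemma rlinear0 : f 0 = 0.
Proof. by apply: (@addrI _ (f 0)); rewrite -rlinearD !addr0. Qed.
Lemma rlinearB x y : f (x - y) = f x - f y.
Proof. by rewrite -!scaleN1r rlinearD rlinearZ. Qed.

Lemma rlinear_sum I (r : seq I) (P : pred I) (F : I -> M) :
  f (\sum_(i <- r | P i) F i) = \sum_(i <- r | P i) f (F i).
Proof. exact: (big_morph f rlinearD rlinear0). Qed.

Lemma rlinear_mx_act n m (A : 'M[R]_(n, m)) x : f \o mx_act A x =1 mx_act A (f \o x).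
Proof. by move=> i; rewrite /= rlinear_sum; apply: eq_bigr => j _; rewrite rlinearZ. Qed.
End RLinear.

Lemma lincomb_mx_act (R : pzRingType) (M : lmod R) n m
    (A : 'I_n -> 'I_m -> R) (x : 'I_m -> M) i :
  lincomb (A i) x = mx_act (\matrix_(i, j) A i j) x i.
Proof. by apply: eq_bigr => j _; rewrite mxE. Qed.

Lemma pure_emb_rlinear (R : pzRingType) (M N : lmod R) (f : M -> N) :
  pure_emb f -> rlinear f.
Proof. by case. Qed.

Lemma pure_emb_inj (R : pzRingType) (M N : lmod R) (f : M -> N) :
  pure_emb f -> injective f.
Proof. by case=> _ []. Qed.

Lemma vN_regular_pure_emb (R : pzRingType) (M N : lmod R) (f : M -> N) :
  vN_regular R -> rlinear f -> injective f -> pure_emb f.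
Proof.
move=> regR linf finj; do 2!split=> //.
move=> n m A c [x Ax]; pose A' : 'M[R]_(n, m) := \matrix_(i, j) A i j.
have [G AGA] := vN_regular_mx regR A'.
have fc : f \o c =1 mx_act A' x by move=> i; rewrite /= -Ax lincomb_mx_act.
exists (mx_act G c) => i; apply: finj; rewrite lincomb_mx_act.
(* f (A G c) = A G (f c) = A G A x = A x = f c *)
rewrite -[LHS]/((f \o _) i) rlinear_mx_act // (eq_mx_act _ (rlinear_mx_act linf G c)).
by rewrite (eq_mx_act _ (eq_mx_act _ fc)) -!mx_actM AGA -fc.
Qed.

Lemma sval_inj (T : Type) (Q : T -> Prop) : injective (@sval T Q).
Proof. by case=> x Qx [y Qy] /= xy; apply: eq_exist. Qed.

Section Submodule.
Variables (R : pzRingType) (N : lmod R) (P : N -> Prop).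
Hypotheses (P0 : P 0) (PD : forall x y, P x -> P y -> P (x + y))
  (PZ : forall r x, P x -> P (r *: x)).

Definition sub_lmod : lmod R.
refine (@LMod R {x | P x} (exist _ 0 P0)
  (fun x y => exist _ (sval x + sval y) (PD (svalP x) (svalP y)))
  (fun x => exist _ (- 1 *: sval x) (PZ (- 1) (svalP x)))
  (fun r x => exist _ (r *: sval x) (PZ r (svalP x))) _ _ _ _ _ _ _ _);
  move=> *; apply: sval_inj => /=.
- exact: addrA.
- exact: addrC.
- exact: add0r.
- by rewrite scaleN1r addNr.
- exact: scalerDr.
- exact: scalerDl.
- by rewrite scalerA.
- exact: scale1r.
Defined.

Lemma sval_rlinear : rlinear (@sval _ _ : sub_lmod -> N).
Proof. by []. Qed.
End Submodule.

Section Span.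
Variables (R : pzRingType) (M N : lmod R) (f : M -> N).
Hypothesis linf : rlinear f.
Variable b : N.

Definition in_span (y : N) := exists r m, y = r *: b + f m.

Lemma in_span0 : in_span 0.
Proof. by exists 0, 0; rewrite scale0r (rlinear0 linf) addr0. Qed.

Lemma in_spanD x y : in_span x -> in_span y -> in_span (x + y).
Proof.
move=> [r [m ->]] [r' [m' ->]]; exists (r + r'), (m + m').
by rewrite scalerDl (rlinearD linf) addrACA.
Qed.

Lemma in_spanZ s x : in_span x -> in_span (s *: x).
Proof.
move=> [r [m ->]]; exists (s * r), (s *: m).
by rewrite scalerDr scalerA (rlinearZ linf).
Qed.

Definition span_lmod := sub_lmod in_span0 in_spanD in_spanZ.

Lemma in_span_f m : in_span (f m).
Proof. by exists 0, m; rewrite scale0r add0r. Qed.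

Lemma in_span_b : in_span b.
Proof. by exists 1, 0; rewrite scale1r (rlinear0 linf) addr0. Qed.

Definition span_f (m : M) : span_lmod := exist _ (f m) (in_span_f m).
Definition span_b : span_lmod := exist _ b in_span_b.

Lemma span_f_rlinear : rlinear span_f.
Proof. by split=> [x y|r x]; apply: sval_inj; [apply: rlinearD | apply: rlinearZ]. Qed.

Lemma span_f_inj : injective f -> injective span_f.
Proof. by move=> finj x y [/finj]. Qed.
End Span.

Lemma span_combinationB (R : pzRingType) (M N : lmod R) (f : M -> N) (b : N) :
  rlinear f -> forall r m r' m',
  (r *: b + f m) - (r' *: b + f m') = (r - r') *: b + f (m - m').
Proof. by move=> linf r m r' m'; rewrite opprD addrACA scalerBl (rlinearB linf). Qed.

Lemma span_combination_transfer (R : pzRingType) (M N1 N2 : lmod R)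
    (f1 : M -> N1) (f2 : M -> N2) (b1 : N1) (b2 : N2) :
  rlinear f1 -> rlinear f2 ->
  (forall r m, r *: b2 + f2 m = 0 -> r *: b1 + f1 m = 0) ->
  forall r m r' m', r *: b2 + f2 m = r' *: b2 + f2 m' -> r *: b1 + f1 m = r' *: b1 + f1 m'.
Proof.
move=> linf1 linf2 ker21 r m r' m'.
move/eqP; rewrite -subr_eq0 (span_combinationB _ linf2) => /eqP/ker21.
by move/eqP; rewrite -(span_combinationB _ linf1) subr_eq0 => /eqP.
Qed.

Section SpanTransfer.
Variables (R : pzRingType) (M N1 N2 : lmod R) (f1 : M -> N1) (f2 : M -> N2).
Hypotheses (linf1 : rlinear f1) (linf2 : rlinear f2).
Variables (b1 : N1) (b2 : N2).
Hypothesis ker21 : forall r m, r *: b2 + f2 m = 0 -> r *: b1 + f1 m = 0.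

Lemma span_coordsP (y : span_lmod linf2 b2) :
  exists p : R * M, sval y = p.1 *: b2 + f2 p.2.
Proof. by case: y => y [r [m yE]]; exists (r, m). Qed.

Definition span_coords (y : span_lmod linf2 b2) : R * M := sval (cid (span_coordsP y)).

Definition span_transfer (y : span_lmod linf2 b2) : N1 :=
  (span_coords y).1 *: b1 + f1 (span_coords y).2.

Lemma span_coordsE y : sval y = (span_coords y).1 *: b2 + f2 (span_coords y).2.
Proof. exact: svalP (cid (span_coordsP y)). Qed.

Lemma span_transferE y r m :
  sval y = r *: b2 + f2 m -> span_transfer y = r *: b1 + f1 m.
Proof.
move=> yE; apply: (span_combination_transfer linf1 linf2 ker21).
by rewrite -yE span_coordsE.
Qed.

Lemma span_transfer_rlinear : rlinear span_transfer.
Proof.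
split=> [x y|s x].
- rewrite (@span_transferE _ ((span_coords x).1 + (span_coords y).1)
    ((span_coords x).2 + (span_coords y).2)).
    by rewrite scalerDl (rlinearD linf1) addrACA.
  by rewrite [sval _]/= !span_coordsE scalerDl (rlinearD linf2) addrACA.
- rewrite (@span_transferE _ (s * (span_coords x).1) (s *: (span_coords x).2)).
    by rewrite -scalerA (rlinearZ linf1) -scalerDr.
  by rewrite [sval _]/= span_coordsE scalerDr scalerA (rlinearZ linf2).
Qed.

Lemma span_transfer_f m : span_transfer (span_f linf2 b2 m) = f1 m.
Proof. by rewrite (@span_transferE _ 0 m) ?scale0r ?add0r. Qed.

Lemma span_transfer_b : span_transfer (span_b linf2 b2) = b1.
Proof.
by rewrite (@span_transferE _ 1 0) ?scale1r ?(rlinear0 linf1) ?(rlinear0 linf2) ?addr0.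
Qed.

Hypothesis ker12 : forall r m, r *: b1 + f1 m = 0 -> r *: b2 + f2 m = 0.

Lemma span_transfer_inj : injective span_transfer.
Proof.
move=> x y; rewrite (span_transferE (span_coordsE x)) (span_transferE (span_coordsE y)).
move=> /(span_combination_transfer linf2 linf1 ker12) xy.
by apply: sval_inj; rewrite !span_coordsE.
Qed.
End SpanTransfer.

Section GaloisTypes.
Variables (R : pzRingType) (K : mclass R).
Hypotheses (regR : vN_regular R) (subK : sub_closed K).
Variable M : lmod R.

Lemma id_pure_emb (N : lmod R) : pure_emb (@id N).
Proof. exact: vN_regular_pure_emb. Qed.

Definition span_triple (t : gtriple K M) : gtriple K M.
Proof.
pose linf := pure_emb_rlinear (gf_pure t).
refine (@GTriple R K M (span_lmod linf (gb t)) _ (span_f linf (gb t)) _ (span_b linf (gb t))).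
- exact: subK (@sval_rlinear _ _ _ _ _ _) (@sval_inj _ _) (gNK t).
- apply: vN_regular_pure_emb => //; first exact: span_f_rlinear.
  exact/span_f_inj/(pure_emb_inj (gf_pure t)).
Defined.

Lemma gatomic_of_pure_emb (t1 t2 : gtriple K M) (g : gN t2 -> gN t1) :
  pure_emb g -> (forall m, g (gf t2 m) = gf t1 m) -> g (gb t2) = gb t1 ->
  gatomic t1 t2.
Proof.
move=> pure_g gf21 gb21; exists (gN t1), id, g.
exact: (conj (gNK t1) (conj (id_pure_emb _)
  (conj pure_g (conj (fun m => esym (gf21 m)) (esym gb21))))).
Qed.

Lemma gatomic_span_triple t : gatomic t (span_triple t).
Proof.
apply: (@gatomic_of_pure_emb t (span_triple t) (@sval _ (in_span (gf t) (gb t)))) => //.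
by apply: vN_regular_pure_emb => //; exact: sval_inj.
Qed.

Lemma gatomic_span_transfer (t1 t2 : gtriple K M) :
  (forall r m, r *: gb t1 + gf t1 m = 0 <-> r *: gb t2 + gf t2 m = 0) ->
  gatomic t1 (span_triple t2).
Proof.
move=> same_ker.
pose linf1 := pure_emb_rlinear (gf_pure t1).
pose linf2 := pure_emb_rlinear (gf_pure t2).
have ker21 r m := proj2 (same_ker r m); have ker12 r m := proj1 (same_ker r m).
apply: (@gatomic_of_pure_emb t1 (span_triple t2)
  (@span_transfer _ _ _ _ (gf t1) _ linf2 (gb t1) (gb t2))).
- apply: vN_regular_pure_emb => //; first exact: span_transfer_rlinear.
  exact: (@span_transfer_inj _ _ _ _ _ _ linf1 linf2 _ _ ker21 ker12).
- exact: span_transfer_f.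
- exact: span_transfer_b.
Qed.

Lemma gatomic_sym (t1 t2 : gtriple K M) : gatomic t1 t2 -> gatomic t2 t1.
Proof.
move=> [N' [g1 [g2 [KN' [pure1 [pure2 [g12 gb12]]]]]]].
by exists N', g2, g1; do 4!split=> //; move=> m; rewrite g12.
Qed.

Lemma gequiv_same_ker (t1 t2 : gtriple K M) :
  (forall r m, r *: gb t1 + gf t1 m = 0 <-> r *: gb t2 + gf t2 m = 0) ->
  gequiv t1 t2.
Proof.
move=> same_ker; apply: (t_trans _ _ _ (span_triple t2)).
  exact/t_step/gatomic_span_transfer.
exact/t_step/gatomic_sym/gatomic_span_triple.
Qed.

Definition ker_type (t : gtriple K M) (r : R) : option M :=
  if pselect (exists m, r *: gb t + gf t m = 0) is left h then Some (sval (cid h))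
  else None.

Lemma ker_typeP t r m : ker_type t r = Some m <-> r *: gb t + gf t m = 0.
Proof.
rewrite /ker_type; case: pselect => [h|nh]; last by split=> // kerm; case: nh; exists m.
case: (cid h) => m' kerm' /=; split=> [[<-] //|kerm].
congr Some; apply: (pure_emb_inj (gf_pure t)); apply: (addrI (r *: gb t)).
by rewrite kerm kerm'.
Qed.

Lemma gequiv_ker_type (t1 t2 : gtriple K M) : ker_type t1 = ker_type t2 -> gequiv t1 t2.
Proof. by move=> same_type; apply: gequiv_same_ker => r m; rewrite -!ker_typeP same_type. Qed.
End GaloisTypes.

Lemma card_le_trans (A B C : Type) : card_le A B -> card_le B C -> card_le A C.
Proof. by move=> [f f_inj] [g g_inj]; exists (g \o f); exact: inj_comp. Qed.

Lemma card_eq_le (A B : Type) : card_eq A B -> card_le A B.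
Proof. by move=> [f /bij_inj f_inj]; exists f. Qed.

Lemma card_le_option (A B : Type) : card_le A B -> card_le (option A) (option B).
Proof. by move=> [f f_inj]; exists (omap f) => [[x|] [y|]] //= [/f_inj ->]. Qed.

Lemma card_le_option_nat (L : Type) : card_le nat L -> card_le (option L) L.
Proof.
move=> [i i_inj].
pose shift (l : L) :=
  if pselect (exists k, l = i k) is left h then i (sval (cid h)).+1 else l.
have shift_i k : shift (i k) = i k.+1.
  rewrite /shift; case: pselect => [h|]; last by case; exists k.
  by case: (cid h) => k' /= /i_inj ->.
have shift_out l : ~ (exists k, l = i k) -> shift l = l.
  by rewrite /shift; case: pselect.
have shift_inj : injective shift.
  move=> l l'.
  case: (pselect (exists k, l = i k)) => [[k ->]|out_l];
  case: (pselect (exists k, l' = i k)) => [[k' ->]|out_l'].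
  - by rewrite !shift_i => /i_inj [->].
  - by rewrite shift_i shift_out // => ik; case: out_l'; exists k.+1.
  - by rewrite shift_i shift_out // => ik; case: out_l; exists k'.+1.
  - by rewrite !shift_out.
have shift_neq0 l : shift l <> i 0.
  case: (pselect (exists k, l = i k)) => [[k ->]|out_l].
    by rewrite shift_i => /i_inj.
  by rewrite shift_out // => l0; apply: out_l; exists 0.
exists (fun o => if o is Some l then shift l else i 0) => [[l|] [l'|]] //=.
- by move/shift_inj ->.
- by move/shift_neq0.
- by move/esym/shift_neq0.
Qed.

Lemma card_le_fun_suml (A B C L : Type) :
  card_le A L -> L -> card_le (B -> A) (B + C -> L).
Proof.
move=> [e e_inj] l0; exists (fun F s => if s is inl b then e (F b) else l0).
by move=> F G FG; apply: funext => b; apply: e_inj; have := congr1 (@^~ (inl b)) FG.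
Qed.

Local Close Scope ring_scope.
Theorem lemma5p7 (R : pzRingType) (K : lmod R -> Prop) :
  vN_regular R -> is_AEC K -> sub_closed K -> arb_large K ->
  forall L : Type, card_le nat L -> card_eq ((R + nat) -> L) L ->
  stable_in K L.
Proof.
move=> regR _ subK _ L natL powL M _ ML.
have [i _] := natL.
have [code code_inj] : card_le (R -> option M) L.
  apply: card_le_trans (card_eq_le powL); apply: card_le_fun_suml (i 0).
  exact: card_le_trans (card_le_option (card_eq_le ML)) (card_le_option_nat natL).
exists (fun t => code (ker_type t)) => t1 t2 /code_inj.
exact: gequiv_ker_type.
Qed.
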